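(* The full subcategory $\mathbf{Top}_{d^{\ast}}$ of $\mathbf{Top}_0$ consisting of all $d^{\ast}$-spaces and continuous maps is not a reflective subcategory of $\mathbf{Top}_0$.
   Context: $\mathbf{Top}_0$ is the category of $T_0$-spaces and continuous maps. A full subcategory is reflective if its inclusion functor has a left adjoint. The specialization order of a space $X$ is given by $x\le y$ iff $x\in cl(\{y\})$; ${\uparrow}$ is taken with respect to it. A $T_0$-space $X$ is a $d^{\ast}$-space if for every directed $D\subseteq X$ (in the specialization order), every $x\in X$ and every nonempty open $U\subseteq X$, $\bigcap_{d\in D}{\uparrow}d\cap{\uparrow}x\subseteq U$ implies ${\uparrow}d\cap{\uparrow}x\subseteq U$ for some $d\in D$. *)

From HB Require Import structures.
From mathcomp Require Import all_boot all_order.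
From mathcomp Require Import all_classical topology.
Set Implicit Arguments. Unset Strict Implicit. Unset Printing Implicit Defensive.
Local Open Scope classical_set_scope.

Definition spec_le (X : topologicalType) (x y : X) : Prop :=
  closure [set y] x.

Definition upset (X : topologicalType) (x : X) : set X :=
  [set z | spec_le x z].

Definition directed (X : topologicalType) (D : set X) : Prop :=
  D !=set0 /\
  forall a b, D a -> D b -> exists2 c, D c & spec_le a c /\ spec_le b c.

Definition dstar_space (X : topologicalType) : Prop :=
  forall (D : set X) (x : X) (U : set X),
    directed D -> open U -> U !=set0 ->
    (\bigcap_(d in D) upset d) `&` upset x `<=` U ->
    exists2 d, D d & upset d `&` upset x `<=` U.

Definition dstar_reflective : Prop :=
  forall X : topologicalType, kolmogorov_space X ->
  exists (Y : topologicalType) (eta : X -> Y),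
    [/\ kolmogorov_space Y, dstar_space Y, continuous eta &
      forall Z : topologicalType, kolmogorov_space Z -> dstar_space Z ->
      forall f : X -> Z, continuous f ->
      exists! g : Y -> Z, continuous g /\ g \o eta = f].

(** Give [nat] and [bool] the Alexandrov topologies of their usual orders (the
    upper topology on omega and the Sierpinski space) and [nat * bool] that of
    the product order.  Both factors are d*-spaces, but the product is not: for
    [D = nat * {false}] the intersection of the upper sets of [D] is empty,
    while no upper set of an element of [D] lies in the open set
    [nat * {true}].  A reflection [eta] of the product into a d*-space [Y]
    would let both projections factor through [Y], making the product a retract
    of [Y]; but retracts of d*-spaces are d*-spaces. *)

From HB Require Import structures.
From mathcomp Require Import all_boot all_order.
From mathcomp Require Import all_classical topology.
Set Implicit Arguments. Unset Strict Implicit. Unset Printing Implicit Defensive.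
Local Open Scope classical_set_scope.

Lemma spec_le_trans (X : topologicalType) (x y z : X) :
  spec_le x y -> spec_le y z -> spec_le x z.
Proof.
move=> xy yz; have yzcl : [set y] `<=` closure [set z] by move=> _ ->.
have /closure_id zcl := @closed_closure _ [set z].
by rewrite /spec_le zcl; exact: closureS yzcl _ xy.
Qed.

Lemma continuous_spec_le (X Y : topologicalType) (f : X -> Y) (x y : X) :
  continuous f -> spec_le x y -> spec_le (f x) (f y).
Proof.
move=> cf xy B /cf /xy [z [-> /= Bfy]].
by exists (f y).
Qed.

Lemma dstar_greatest (X : topologicalType) (D : set X) (m x : X) (U : set X) :
  D m -> (forall d, D d -> spec_le d m) ->
  (\bigcap_(d in D) upset d) `&` upset x `<=` U ->
  exists2 d, D d & upset d `&` upset x `<=` U.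
Proof.
move=> Dm mD DxU; exists m => // z [mz xz]; apply: DxU; split => //.
by move=> d /mD dm; exact: spec_le_trans dm mz.
Qed.

Lemma dstar_retract (X Y : topologicalType) (eta : X -> Y) (r : Y -> X) :
  continuous eta -> continuous r -> cancel eta r ->
  dstar_space Y -> dstar_space X.
Proof.
move=> ceta cr etaK dY D x U [[d0 Dd0] dirD] oU [u Uu] DxU.
have spec_r y y' : spec_le y y' -> spec_le (r y) (r y') by exact: continuous_spec_le.
have spec_eta x1 x2 : spec_le x1 x2 -> spec_le (eta x1) (eta x2).
  exact: continuous_spec_le.
have dirD' : directed (eta @` D).
  split; first by exists (eta d0), d0.
  move=> _ _ [a Da <-] [b Db <-]; have [c Dc [ac bc]] := dirD a b Da Db.
  by exists (eta c); [exists c|split; exact: spec_eta].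
have oU' : open (r @^-1` U) by move/continuousP: cr; apply.
have U'0 : r @^-1` U !=set0 by exists (eta u); rewrite /= etaK.
have [|_ [d Dd <-] dU] := dY _ (eta x) _ dirD' oU' U'0.
  move=> y [Dy xy]; apply: DxU; split; last by rewrite /upset /= -(etaK x); exact: spec_r.
  by move=> d Dd; rewrite /upset /= -(etaK d); apply/spec_r/Dy; exists d.
exists d => // z [dz xz]; rewrite -(etaK z); apply: dU.
by split; exact: spec_eta.
Qed.

(* [T] with the topology whose open sets are the [le]-upper sets; mentioning
   [le] in the type lets each relation carry its own topology instance. *)
Definition alexandrov (T : Type) (le : T -> T -> Prop) : Type := T.

Section AlexandrovTopology.
Variables (T : choiceType) (le : T -> T -> Prop).

Definition upper_closed (A : set T) := forall x y, A x -> le x y -> A y.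

HB.instance Definition _ := Choice.on (alexandrov le).

Let upper_closedT : upper_closed setT. Proof. by []. Qed.

Let upper_closedI : setI_closed upper_closed.
Proof. by move=> A B uA uB x y [Ax Bx] xy; split; [exact: uA Ax xy|exact: uB Bx xy]. Qed.

Let upper_closed_bigcup (I : Type) (F : I -> set T) :
  (forall i, upper_closed (F i)) -> upper_closed (\bigcup_i F i).
Proof. by move=> uF x y [i _ Fx] xy; exists i => //; exact: uF Fx xy. Qed.

HB.instance Definition _ :=
  isOpenTopological.Build (alexandrov le) upper_closedT upper_closedI upper_closed_bigcup.

End AlexandrovTopology.

Section AlexandrovPreorder.
Variables (T : choiceType) (le : T -> T -> Prop).
Hypothesis le_refl : forall x, le x x.
Hypothesis le_trans : forall x y z, le x y -> le y z -> le x z.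

Lemma alexandrov_nbhs_up (a : alexandrov le) : nbhs a (le a).
Proof. by exists (le a); split => //= x y ax /(le_trans ax). Qed.

Lemma alexandrov_openE (A : set (alexandrov le)) : open A <-> upper_closed le A.
Proof.
rewrite openE; split; last by move=> uA x Ax; exists A; split.
by move=> oA x y /oA [O [uO Ox OA]] xy; exact/OA/(uO x).
Qed.

Lemma alexandrov_spec_le (x y : alexandrov le) : spec_le x y <-> le x y.
Proof.
split; first by move=> /(_ _ (alexandrov_nbhs_up x)) [z [-> /=]].
by move=> xy B [O [uO Ox OB]]; exists y; split => //; exact/OB/(uO x).
Qed.

Lemma alexandrov_kolmogorov :
  (forall x y, le x y -> le y x -> x = y) -> kolmogorov_space (alexandrov le).
Proof.
move=> le_anti x y /eqP xy.
have [lxy|nlxy] := pselect (le x y).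
  exists (le y); right; split; first by rewrite inE; exact: alexandrov_nbhs_up.
  by rewrite inE => yx; apply: xy; exact: le_anti.
by exists (le x); left; split; rewrite inE //; exact: alexandrov_nbhs_up.
Qed.

End AlexandrovPreorder.

Lemma alexandrov_continuous (T S : choiceType) (le : T -> T -> Prop) (leS : S -> S -> Prop)
    (f : alexandrov le -> alexandrov leS) :
  (forall x y, le x y -> leS (f x) (f y)) -> continuous f.
Proof.
move=> f_mono; apply/continuousP => A /alexandrov_openE uA.
by apply/alexandrov_openE => x y /= Ax /f_mono; exact: uA.
Qed.

Section AlexandrovProduct.
Variables (T1 T2 : choiceType) (le1 : T1 -> T1 -> Prop) (le2 : T2 -> T2 -> Prop).
Hypothesis le1_refl : forall x, le1 x x.
Hypothesis le1_trans : forall x y z, le1 x y -> le1 y z -> le1 x z.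
Hypothesis le2_refl : forall x, le2 x x.
Hypothesis le2_trans : forall x y z, le2 x y -> le2 y z -> le2 x z.

Definition prod_le (p q : T1 * T2) : Prop := le1 p.1 q.1 /\ le2 p.2 q.2.

Local Notation P := (alexandrov prod_le).

Lemma prod_le_refl (p : T1 * T2) : prod_le p p.
Proof. by split. Qed.

Lemma prod_le_trans (p q s : T1 * T2) : prod_le p q -> prod_le q s -> prod_le p s.
Proof. by move=> [pq1 pq2] [qs1 qs2]; split; [exact: le1_trans qs1|exact: le2_trans qs2]. Qed.

Lemma alexandrov_pair_continuous (Y : topologicalType)
    (g1 : Y -> alexandrov le1) (g2 : Y -> alexandrov le2) :
  continuous g1 -> continuous g2 -> continuous (fun y => (g1 y, g2 y) : P).
Proof.
move=> cg1 cg2; apply/continuousP => A /alexandrov_openE uA; rewrite openE => y Ay.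
have n1 : nbhs y (g1 @^-1` le1 (g1 y)).
  by apply: cg1; exact: alexandrov_nbhs_up le1_refl le1_trans _.
have n2 : nbhs y (g2 @^-1` le2 (g2 y)).
  by apply: cg2; exact: alexandrov_nbhs_up le2_refl le2_trans _.
by apply: filterS (filterI n1 n2) => w [yw1 yw2]; apply: (uA (g1 y, g2 y)).
Qed.

Lemma alexandrov_fst_continuous : continuous (fun p : P => p.1 : alexandrov le1).
Proof. by apply: alexandrov_continuous => p q []. Qed.

Lemma alexandrov_snd_continuous : continuous (fun p : P => p.2 : alexandrov le2).
Proof. by apply: alexandrov_continuous => p q []. Qed.

Lemma alexandrov_prod_kolmogorov :
  (forall x y, le1 x y -> le1 y x -> x = y) ->
  (forall x y, le2 x y -> le2 y x -> x = y) -> kolmogorov_space P.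
Proof.
move=> anti1 anti2; apply: alexandrov_kolmogorov prod_le_refl prod_le_trans _.
by move=> [a b] [c d] [/= ac bd] [/= ca db]; rewrite (anti1 a c ac ca) (anti2 b d bd db).
Qed.

End AlexandrovProduct.

Definition nat_le (m n : nat) : Prop := (m <= n)%N.
Definition bool_le (a b : bool) : Prop := a ==> b.

Lemma nat_le_refl n : nat_le n n.
Proof. exact: leqnn. Qed.

Lemma nat_le_trans m n p : nat_le m n -> nat_le n p -> nat_le m p.
Proof. exact: leq_trans. Qed.

Lemma nat_le_anti m n : nat_le m n -> nat_le n m -> m = n.
Proof. by move=> mn nm; apply/eqP; rewrite eqn_leq mn. Qed.

Lemma bool_le_refl a : bool_le a a.
Proof. exact: implybb. Qed.

Lemma bool_le_trans a b c : bool_le a b -> bool_le b c -> bool_le a c.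
Proof. by case: a; case: b. Qed.

Lemma bool_le_anti a b : bool_le a b -> bool_le b a -> a = b.
Proof. by case: a; case: b. Qed.

Local Notation omega := (alexandrov nat_le).
Local Notation sierpinski := (alexandrov bool_le).
Local Notation omega_sierpinski := (alexandrov (prod_le nat_le bool_le)).

Lemma nat_le_spec (m n : omega) : spec_le m n <-> (m <= n)%N.
Proof. exact: (alexandrov_spec_le nat_le_refl nat_le_trans m n). Qed.

Lemma dstar_omega : dstar_space omega.
Proof.
move=> D x U [[d0 Dd0] _] /alexandrov_openE uU [u Uu] DxU.
have [[d Dd ud]|noD] := pselect (exists2 d, D d & (u <= d)%N).
  by exists d => // z [/nat_le_spec dz _]; exact: uU (uU _ _ Uu ud) dz.
(* Otherwise [D] is bounded by [u], hence has a greatest element. *)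
have Du : forall n, `[< D n >] -> (n <= u)%N.
  move=> n /asboolP Dn; apply: ltnW; rewrite ltnNge; apply/negP => un.
  by apply: noD; exists n.
case: (ex_maxnP (ex_intro _ d0 (asboolT Dd0)) Du) => m /asboolP Dm mD.
apply: dstar_greatest Dm _ DxU => d Dd; apply/nat_le_spec.
by apply: mD; exact: asboolT.
Qed.

Lemma dstar_sierpinski : dstar_space sierpinski.
Proof.
have spec := alexandrov_spec_le bool_le_refl bool_le_trans.
move=> D x U [[d0 Dd0] _] _ _ DxU.
have [Dtrue|NDtrue] := pselect (D true).
  by apply: dstar_greatest Dtrue _ DxU => d _; apply/spec; rewrite /bool_le implybT.
apply: dstar_greatest Dd0 _ DxU => -[] Dd; [by case: (NDtrue Dd)|exact/spec].
Qed.

Lemma not_dstar_omega_sierpinski : ~ dstar_space omega_sierpinski.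
Proof.
have spec := alexandrov_spec_le (prod_le_refl nat_le_refl bool_le_refl)
  (prod_le_trans nat_le_trans bool_le_trans).
pose D : set omega_sierpinski := [set p | p.2 = false].
have dirD : directed D.
  split; first by exists (0, false).
  move=> a b Da Db; exists (maxn a.1 b.1, false) => //.
  by split; apply/spec; split; rewrite /nat_le /bool_le /= ?leq_maxl ?leq_maxr ?Da ?Db.
have oU : open ([set p | p.2 = true] : set omega_sierpinski).
  by apply/alexandrov_openE => p q /= pT [_]; rewrite /bool_le pT.
move=> dstar; case: (dstar D (0, false) [set p | p.2 = true] dirD oU).
- by exists (0, true).
- move=> z [Dz _].
  have /spec [] : spec_le ((z.1.+1, false) : omega_sierpinski) z by apply: Dz.
  by rewrite /nat_le ltnn.
- move=> d Dd dU; suff : d.2 = true by rewrite Dd.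
  by apply: dU; split; apply/spec; split; rewrite /nat_le /bool_le /= ?leqnn ?implybb.
Qed.

Theorem mainTheorem4 : ~ dstar_reflective.
Proof.
move=> reflective.
have T0prod : kolmogorov_space omega_sierpinski.
  exact: alexandrov_prod_kolmogorov nat_le_refl nat_le_trans bool_le_refl bool_le_trans
    nat_le_anti bool_le_anti.
have [Y [eta [_ dstarY ceta univ]]] := reflective _ T0prod.
have T0omega := alexandrov_kolmogorov nat_le_refl nat_le_trans nat_le_anti.
have T0sierpinski := alexandrov_kolmogorov bool_le_refl bool_le_trans bool_le_anti.
have [g1 [[cg1 g1eta] _]] :=
  univ _ T0omega dstar_omega _ (@alexandrov_fst_continuous _ _ nat_le bool_le).
have [g2 [[cg2 g2eta] _]] :=
  univ _ T0sierpinski dstar_sierpinski _ (@alexandrov_snd_continuous _ _ nat_le bool_le).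
pose r y : omega_sierpinski := (g1 y, g2 y).
apply/not_dstar_omega_sierpinski/(dstar_retract (r := r) ceta _ _ dstarY).
- exact: (alexandrov_pair_continuous nat_le_refl nat_le_trans bool_le_refl bool_le_trans
    cg1 cg2).
- by move=> p; rewrite /r; move: (congr1 (@^~ p) g1eta) (congr1 (@^~ p) g2eta) => /= -> ->;
    case: p.
Qed.
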